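(* Let $\star$ be a $t$-definer, let $n\ge 1$ and let $(X_1,d_1^\star),\dots,(X_n,d_n^\star)$ be nonempty $\star$-metric spaces, and let $X=\prod_{i=1}^n X_i$. For $x=(x_i)_{i=1}^n$, $y=(y_i)_{i=1}^n\in X$ define $d_T^\star(x,y)=d_1^\star(x_1,y_1)\star d_2^\star(x_2,y_2)\star\cdots\star d_n^\star(x_n,y_n)$ and $d_{\max}^\star(x,y)=\max_{1\le i\le n}d_i^\star(x_i,y_i)$. Then: (1) $(X,d_T^\star)$ is totally bounded if and only if every $(X_i,d_i^\star)$ is totally bounded; (2) $(X,d_{\max}^\star)$ is totally bounded if and only if every $(X_i,d_i^\star)$ is totally bounded.
   Context: A $t$-definer is a function $\star:[0,\infty)\times[0,\infty)\to[0,\infty)$ such that for all $a,b,c\ge 0$: $a\star b=b\star a$; $a\star(b\star c)=(a\star b)\star c$; if $a\le b$ then $a\star c\le b\star c$; $a\star 0=a$; and $\star$ is continuous in its first variable with respect to the Euclidean topology. Given a nonempty set $Y$, a $\star$-metric on $Y$ is a function $\rho:Y\times Y\to[0,\infty)$ such that for all $x,y,z\in Y$: $\rho(x,y)=0$ iff $x=y$; $\rho(x,y)=\rho(y,x)$; and $\rho(x,y)\le \rho(x,z)\star \rho(z,y)$; $(Y,\rho)$ is a $\star$-metric space. Both $d_T^\star$ and $d_{\max}^\star$ are $\star$-metrics on $X$ (with the same $t$-definer $\star$). A $\star$-metric space $(Y,\rho)$ is totally bounded if for every $\epsilon>0$ there is a finite set $F\subseteq Y$ with $Y=\bigcup_{x\in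 F}\{y\in Y:\rho(x,y)<\epsilon\}$. *)

From mathcomp Require Import all_boot all_order all_algebra.
From mathcomp Require Import reals.
From Stdlib Require List.
Set Implicit Arguments. Unset Strict Implicit. Unset Printing Implicit Defensive.
Import Order.TTheory GRing.Theory Num.Theory.
Local Open Scope ring_scope.

(* A t-definer: a binary operation on [0,oo), represented as a function
   R -> R -> R whose values off [0,oo) are irrelevant. *)
Definition t_definer (R : realType) (star : R -> R -> R) : Prop :=
  (forall a b, 0 <= a -> 0 <= b -> 0 <= star a b) /\
  (forall a b, 0 <= a -> 0 <= b -> star a b = star b a) /\
  (forall a b c, 0 <= a -> 0 <= b -> 0 <= c ->
      star a (star b c) = star (star a b) c) /\
  (forall a b c, 0 <= a -> 0 <= b -> 0 <= c -> a <= b -> star a c <= star b c) /\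
  (forall a, 0 <= a -> star a 0 = a) /\
  (forall b a, 0 <= b -> 0 <= a -> forall eps : R, 0 < eps ->
     exists2 delta : R, 0 < delta &
       forall a', 0 <= a' -> `|a' - a| < delta -> `|star a' b - star a b| < eps).

Definition star_metric (R : realType) (star : R -> R -> R) (Y : Type)
  (rho : Y -> Y -> R) : Prop :=
  (forall x y, 0 <= rho x y) /\
  (forall x y, rho x y = 0 <-> x = y) /\
  (forall x y, rho x y = rho y x) /\
  (forall x y z, rho x y <= star (rho x z) (rho z y)).

Definition totally_bounded (R : realType) (Y : Type) (rho : Y -> Y -> R) : Prop :=
  forall eps : R, 0 < eps ->
    exists F : seq Y, forall y : Y, exists2 x, List.In x F & rho x y < eps.

(* d_T(x,y) = d_1(x_1,y_1) * (d_2(x_2,y_2) * ( ... * (d_n(x_n,y_n) * 0)))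
   which equals d_1 * ... * d_n since a * 0 = a. *)
Definition dT (R : realType) (star : R -> R -> R) (n : nat) (X : 'I_n -> Type)
  (d : forall i, X i -> X i -> R) (x y : forall i, X i) : R :=
  \big[star/0]_(i < n) d i (x i) (y i).

(* d_max(x,y) = max_i d_i(x_i,y_i) (the 0 seed is harmless: distances are >= 0). *)
Definition dmax (R : realType) (n : nat) (X : 'I_n -> Type)
  (d : forall i, X i -> X i -> R) (x y : forall i, X i) : R :=
  \big[Num.max/0]_(i < n) d i (x i) (y i).

(** Both distances iterate an operation [op] on [0, oo) that dominates each
    of its arguments and is small when both arguments are small.  Domination
    makes every coordinate projection 1-Lipschitz, so covers of the product
    project onto covers of the factors; smallness makes the finite grid built
    from fine enough covers of the factors a cover of the product.  For a
    t-definer, [b <= star a b] follows from monotonicity and [star 0 b = b],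
    and smallness from continuity of [star] in its first argument at [0]. *)

From mathcomp Require Import all_boot all_order all_algebra.
From mathcomp Require Import reals.
From Stdlib Require List.
Import Order.TTheory GRing.Theory Num.Theory.
Local Open Scope ring_scope.

Lemma In_map {T U : Type} (f : T -> U) (x : T) (s : seq T) :
  List.In x s -> List.In (f x) (map f s).
Proof. by elim: s => [|y s IH] //= [->|/IH]; [left|right]. Qed.

Lemma In_mem {T : eqType} (x : T) (s : seq T) : x \in s -> List.In x s.
Proof. by elim: s => [|y s IH] //; rewrite in_cons => /predU1P[->|/IH]; [left|right]. Qed.

Lemma In_nth {T : Type} (x0 x : T) (s : seq T) :
  List.In x s -> exists2 k, (k < size s)%N & nth x0 s k = x.
Proof.
elim: s => [|y s IH] //= [->|/IH[k k_lt <-]]; first by exists 0%N.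
by exists k.+1.
Qed.

Section IteratedOperation.
Variables (R : realType) (op : R -> R -> R).
Hypothesis op_gel : forall {a b : R}, 0 <= a -> 0 <= b -> a <= op a b.
Hypothesis op_ger : forall {a b : R}, 0 <= a -> 0 <= b -> b <= op a b.
Hypothesis op_small : forall {eps : R}, 0 < eps -> exists2 delta, 0 < delta &
  forall a b : R, 0 <= a -> 0 <= b -> a < delta -> b < delta -> op a b < eps.

Lemma big_op_ge0 {I : Type} (r : seq I) (F : I -> R) :
  (forall i, 0 <= F i) -> 0 <= \big[op/0]_(i <- r) F i.
Proof.
move=> F_ge0; elim: r => [|j r IH]; first by rewrite big_nil.
by rewrite big_cons; exact: le_trans (F_ge0 j) (op_gel (F_ge0 j) IH).
Qed.

Lemma le_big_op {I : eqType} (r : seq I) (F : I -> R) (i : I) :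
  (forall j, 0 <= F j) -> i \in r -> F i <= \big[op/0]_(j <- r) F j.
Proof.
move=> F_ge0; elim: r => [|j r IH] //; rewrite in_cons big_cons.
have big_ge0 := big_op_ge0 r F F_ge0.
case/predU1P => [->|/IH Fi_le]; first exact: op_gel.
exact: le_trans Fi_le (op_ger (F_ge0 j) big_ge0).
Qed.

Lemma big_op_small {I : Type} (r : seq I) (eps : R) : 0 < eps ->
  exists2 delta, 0 < delta & forall F : I -> R, (forall i, 0 <= F i) ->
    (forall i, F i < delta) -> \big[op/0]_(i <- r) F i < eps.
Proof.
elim: r eps => [|j r IH] eps eps_gt0.
  by exists 1 => // F _ _; rewrite big_nil.
have [delta delta_gt0 op_lt] := op_small eps_gt0.
have [delta' delta'_gt0 big_lt] := IH delta delta_gt0.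
exists (Num.min delta delta'); first by rewrite lt_min delta_gt0.
move=> F F_ge0 F_lt.
have F_lt_delta i : F i < delta by have := F_lt i; rewrite lt_min => /andP[].
have F_lt_delta' i : F i < delta' by have := F_lt i; rewrite lt_min => /andP[].
rewrite big_cons; apply: op_lt => //; first exact: big_op_ge0.
exact: big_lt.
Qed.

Variables (n : nat) (X : 'I_n -> Type) (d : forall i : 'I_n, X i -> X i -> R).
Hypothesis d_ge0 : forall i (x y : X i), 0 <= d i x y.

Let big_dist (x y : forall i, X i) : R := \big[op/0]_(i < n) d i (x i) (y i).

Lemma totally_bounded_proj (i : 'I_n) :
  inhabited (forall j, X j) -> totally_bounded big_dist -> totally_bounded (d i).
Proof.
move=> [z] tb_prod eps eps_gt0; have [F F_cover] := tb_prod eps eps_gt0.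
exists (map (fun x => x i) F) => y.
have [x x_in dist_lt] := F_cover (dfwith z y).
exists (x i); first exact: (In_map (fun x => x i)).
apply: le_lt_trans dist_lt; rewrite -[Y in d i _ Y](dfwith_in z y).
by apply: (le_big_op _ (fun j => d j (x j) (dfwith z y j))); rewrite ?mem_index_enum.
Qed.

Lemma totally_bounded_prod :
  (forall i, totally_bounded (d i)) -> totally_bounded big_dist.
Proof.
move=> tb_d eps eps_gt0.
have [delta delta_gt0 big_lt] := big_op_small (index_enum 'I_n) _ eps_gt0.
have /fin_all_exists[G G_cover] := fun i => tb_d i delta delta_gt0.
pose K := {dffun forall i, 'I_(size (G i))}.
pose grid_point (k : K) i := tnth (in_tuple (G i)) (k i).
exists (map grid_point (enum K)) => y.
have /fin_all_exists[k k_near] :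
    forall i, exists k : 'I_(size (G i)), d i (tnth (in_tuple (G i)) k) (y i) < delta.
  move=> i; have [x /(In_nth x)[j j_lt <-] near] := G_cover i (y i).
  by exists (Ordinal j_lt); rewrite (tnth_nth x).
exists (grid_point (finfun k)); first by apply/In_map/(@In_mem K); rewrite mem_enum.
by apply: big_lt => // i; rewrite /grid_point ffunE.
Qed.

Lemma totally_bounded_big_op : (forall i, inhabited (X i)) ->
  totally_bounded big_dist <-> forall i, totally_bounded (d i).
Proof.
move=> X_inhabited; split; last exact: totally_bounded_prod.
have /fin_all_exists[z _] : forall i, exists x : X i, True.
  by move=> i; case: (X_inhabited i) => x; exists x.
by move=> tb_prod i; apply: totally_bounded_proj (inhabits z) tb_prod.
Qed.

End IteratedOperation.

Section TDefiner.
Variables (R : realType) (star : R -> R -> R).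
Hypothesis star_tdef : t_definer star.

Lemma t_definer_gel (a b : R) : 0 <= a -> 0 <= b -> a <= star a b.
Proof.
have [_ [starC [_ [star_mono [star0 _]]]]] := star_tdef.
move=> a_ge0 b_ge0; rewrite -{1}(star0 a a_ge0) starC // (starC a) //.
exact: star_mono.
Qed.

Lemma t_definer_ger (a b : R) : 0 <= a -> 0 <= b -> b <= star a b.
Proof.
have [_ [starC _]] := star_tdef.
by move=> a_ge0 b_ge0; rewrite starC //; exact: t_definer_gel.
Qed.

Lemma t_definer_small (eps : R) : 0 < eps -> exists2 delta, 0 < delta &
  forall a b : R, 0 <= a -> 0 <= b -> a < delta -> b < delta -> star a b < eps.
Proof.
have [_ [starC [_ [star_mono [star0 star_cont]]]]] := star_tdef.
move=> eps_gt0; have h_gt0 : 0 < eps / 2 by rewrite divr_gt0.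
have h_ge0 := ltW h_gt0.
have [e e_gt0 near0] := star_cont (eps / 2) 0 h_ge0 (lexx 0) (eps / 2) h_gt0.
exists (Num.min e (eps / 2)); first by rewrite lt_min e_gt0.
move=> a b a_ge0 b_ge0; rewrite !lt_min => /andP[a_lt_e _] /andP[_ b_lt_h].
have star_le : star a b <= star a (eps / 2).
  by rewrite starC // (starC a) //; apply: star_mono => //; exact: ltW.
apply: le_lt_trans star_le _.
have := near0 a a_ge0; rewrite subr0 ger0_norm // => /(_ a_lt_e).
rewrite (starC 0) ?lexx // star0 // ltr_norml => /andP[_].
by rewrite ltrBlDr -splitr.
Qed.

End TDefiner.

Theorem theorem3p7 (R : realType) (star : R -> R -> R) (hstar : t_definer star)
  (n : nat) (hn : (0 < n)%N) (X : 'I_n -> Type)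
  (d : forall i : 'I_n, X i -> X i -> R)
  (hd : forall i, star_metric star (d i))
  (hne : forall i, inhabited (X i)) :
  (totally_bounded (dT star d) <-> forall i, totally_bounded (d i)) /\
  (totally_bounded (dmax d) <-> forall i, totally_bounded (d i)).
Proof.
have d_ge0 i (x y : X i) : 0 <= d i x y by have [] := hd i.
split.
  apply: totally_bounded_big_op d_ge0 hne.
  - exact: t_definer_gel.
  - exact: t_definer_ger.
  - exact: t_definer_small.
apply: totally_bounded_big_op d_ge0 hne.
- by move=> a b a_ge0 _; rewrite le_max lexx.
- by move=> a b _ _; rewrite le_max lexx orbT.
- by move=> eps eps_gt0; exists eps => // a b _ _ a_lt b_lt; rewrite gt_max a_lt.
Qed.
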